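(* Let $V$ be an $N$-dimensional vector space over $\mathbb{F}_q$ and $\mathcal{F},\mathcal{G}\subset V$ spanning families with extended families $\overline{\mathcal{F}},\overline{\mathcal{G}}$. If there is a matroid isomorphism $\psi:\overline{\mathcal{F}}\to\overline{\mathcal{G}}$ with $\psi(\mathcal{F})=\mathcal{G}$, then $|S^{\mathcal{F}}_t(0)|=|S^{\mathcal{G}}_t(0)|$ for every $t\in\mathbb{N}$.
   Context: A spanning family is a set of pairwise linearly independent nonzero vectors spanning $V$; $\operatorname{wt}_{\mathcal{F}}(v)=\min\{|I|:I\subseteq\mathcal{F},v\in\langle I\rangle\}$ and $S^{\mathcal{F}}_t(0)=\{v\in V:\operatorname{wt}_{\mathcal{F}}(v)=t\}$. A hyperplane generated by vectors in $\mathcal{F}$ is the span of $N-1$ linearly independent vectors of $\mathcal{F}$; the extended family $\overline{\mathcal{F}}$ is the set of vectors $v$ (one representative per line) such that $\langle v\rangle$ is an intersection of hyperplanes generated by vectors in $\mathcal{F}$ (one has $\mathcal{F}\subseteq\overline{\mathcal{F}}$). The matroid of a set of vectors has that set as ground set and its linearly independent subsets as independent sets; a matroid isomorphism $\psi:\overline{\mathcal{F}}\to\overline{\mathcal{G}}$ is a bijection such that a subset $I\subseteq\overline{\mathcal{F}}$ is linearly independent iff $\psi(I)$ is. *)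

From HB Require Import structures.
From mathcomp Require Import all_boot all_order all_algebra.
Set Implicit Arguments. Unset Strict Implicit. Unset Printing Implicit Defensive.
Import GRing.Theory.
Local Open Scope ring_scope.

Section Defs.
Variables (K : finFieldType) (N : nat).
Local Notation V := 'rV[K]_N.

Definition indep (I : {set V}) : bool := free (enum I).

Definition spanning_family (F : {set V}) : Prop :=
  [/\ forall v, v \in F -> v != 0,
      forall u v, u \in F -> v \in F -> u != v -> free [:: u; v]
    & <<enum F>>%VS = fullv].

(* weight: min |I| over I subset F with v in <I> (always attained when F spans) *)
Definition wt (F : {set V}) (v : V) : nat :=
  \big[minn/N.+1]_(I : {set V} | (I \subset F) && (v \in <<enum I>>%VS)) #|I|.

Definition sphere (F : {set V}) (t : nat) : {set V} := [set v | wt F v == t].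

Definition hyperplane_gen (F : {set V}) (H : {vspace V}) : Prop :=
  exists I : {set V}, [/\ I \subset F, #|I| = N.-1, indep I & H = <<enum I>>%VS].

Definition line_of_hyperplanes (F : {set V}) (v : V) : Prop :=
  v != 0 /\ exists Hs : seq {vspace V},
    (forall H, H \in Hs -> hyperplane_gen F H) /\
    (\bigcap_(H <- Hs) H)%VS = <[v]>%VS.

(* Fbar is an extended family of F: one representative per such line,
   with representatives chosen so that F is contained in Fbar. *)
Definition extended_family (F Fbar : {set V}) : Prop :=
  [/\ F \subset Fbar,
      forall w, w \in Fbar -> line_of_hyperplanes F w,
      forall u w, u \in Fbar -> w \in Fbar -> <[u]>%VS = <[w]>%VS -> u = w
    & forall v, line_of_hyperplanes F v -> exists2 w, w \in Fbar & <[w]>%VS = <[v]>%VS].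

Definition matroid_iso (Fbar Gbar : {set V}) (psi : V -> V) : Prop :=
  [/\ {in Fbar &, injective psi}, psi @: Fbar = Gbar
    & forall I : {set V}, I \subset Fbar -> indep I = indep (psi @: I)].

End Defs.

From mathcomp Require Import all_boot all_order all_algebra finfield.
From mathcomp Require Import zify.
Set Implicit Arguments. Unset Strict Implicit. Unset Printing Implicit Defensive.
Import Order.TTheory.

(* The type of a vector v is the family of subsets I of F with v in <I>, so
   wt F v is the least size of a member of its type; with respect to G = psi F
   the type is read through I |-> psi I.  By Moebius inversion over families of
   subsets, the two distributions of types agree as soon as, for every family
   S, the subspaces W_F = \bigcap_(I in S) <I> and W_G = \bigcap_(I in S) <psi I>
   have the same dimension.  W_F is an intersection of hyperplanes generated by
   F, and such a subspace is spanned by the vectors of Fbar it contains: a line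
   by the definition of Fbar, a larger one as the sum of its intersections with
   two suitable hyperplanes.  As psi preserves ranks on Fbar, w lies in <I> iff
   psi w lies in <psi I>, so psi maps Fbar ∩ W_F onto Gbar ∩ W_G and preserves
   its rank. *)

Section TypeCounting.
Variables (T X : finType).
Implicit Types (ta tb : T -> {set X}) (S : {set X}).

Lemma card_set_partition ta (P : pred {set X}) :
  #|[set v | P (ta v)]| = \sum_(S | P S) #|[set v | ta v == S]|.
Proof.
rewrite -sum1_card (partition_big ta P) /=; last by move=> v; rewrite inE.
apply: eq_bigr => S PS; rewrite -sum1_card; apply: eq_bigl => v.
by rewrite !inE; case: eqP => [->|]; rewrite ?PS ?andbF.
Qed.

Lemma eq_card_fibers_of_upsets ta tb :
  (forall S, #|[set v | S \subset ta v]| = #|[set v | S \subset tb v]|) ->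
  forall S, #|[set v | ta v == S]| = #|[set v | tb v == S]|.
Proof.
move=> eq_up S; have [k] := ubnP #|~: S|; elim: k S => // k IH S ltSk.
have upsetE (t : T -> {set X}) : #|[set v | S \subset t v]| = #|[set v | t v == S]| +
    \sum_(U : {set X} | (S \subset U) && (U != S)) #|[set v | t v == U]|.
  by rewrite (card_set_partition t (fun U => S \subset U)) (bigD1 S) ?subxx.
have := eq_up S; rewrite !upsetE (eq_bigr _ (fun U _ => IH U _)) => [/addIn //|].
move=> U /andP[sSU nUS]; rewrite -ltnS (leq_trans _ ltSk) // ltnS proper_card //.
by rewrite properC properEneq eq_sym nUS.
Qed.

Lemma eq_card_preim_of_upsets ta tb :
  (forall S, #|[set v | S \subset ta v]| = #|[set v | S \subset tb v]|) ->
  forall P : pred {set X}, #|[set v | P (ta v)]| = #|[set v | P (tb v)]|.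
Proof.
move=> eq_up P; rewrite !card_set_partition.
by apply: eq_bigr => S _; apply: eq_card_fibers_of_upsets.
Qed.

End TypeCounting.

Lemma imset_preimset (aT rT : finType) (f : aT -> rT) (A : {set aT}) (J : {set rT}) :
  J \subset f @: A -> f @: (A :&: f @^-1: J) = J.
Proof.
move=> sJ; apply/setP => y; apply/imsetP/idP => [[x]|yJ].
  by rewrite !inE => /andP[_ fxJ] ->.
have /imsetP[x xA yfx] := subsetP sJ y yJ.
by exists x => //; rewrite !inE xA -yfx.
Qed.

Lemma perm_enum_set_uniq (T : finType) (s : seq T) :
  uniq s -> perm_eq (enum [set x in s]) s.
Proof.
by move=> us; apply: uniq_perm; rewrite ?enum_uniq // => x; rewrite mem_enum inE.
Qed.

Lemma eq_bigmin_image (I1 I2 : finType) (P1 : pred I1) (P2 : pred I2)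
    (f1 : I1 -> nat) (f2 : I2 -> nat) x :
  (forall i, P1 i -> exists2 j, P2 j & f2 j = f1 i) ->
  (forall j, P2 j -> exists2 i, P1 i & f1 i = f2 j) ->
  \big[minn/x]_(i | P1 i) f1 i = \big[minn/x]_(j | P2 j) f2 j.
Proof.
have le_bigmin (J1 J2 : finType) (Q1 : pred J1) (Q2 : pred J2) g1 g2 :
    (forall j, Q2 j -> exists2 i, Q1 i & g1 i = g2 j) ->
    \big[minn/x]_(i | Q1 i) g1 i <= \big[minn/x]_(j | Q2 j) g2 j.
  move=> img; apply/(bigmin_geP (T := nat)); split=> [|j /img[i Q1i <-]].
    exact: bigmin_le_id.
  exact: bigmin_le_cond.
by move=> img1 img2; apply/eqP; rewrite eqn_leq !le_bigmin.
Qed.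

Section SpanFacts.
Variables (K : fieldType) (vT : vectType K).
Implicit Types (s r B X : seq vT).

Lemma free_extension s r : free s -> exists B,
  [/\ free B, {subset s <= B}, {subset B <= s ++ r} & <<B>>%VS = <<s ++ r>>%VS].
Proof.
elim: r s => [|x r IH] s fs; first by exists s; rewrite cats0; split.
have [xs | xNs] := boolP (x \in <<s>>%VS).
  have [B [fB sB Bsr eB]] := IH s fs; exists B; split=> //.
    by move=> y /Bsr; rewrite !mem_cat inE => /orP[]->; rewrite ?orbT.
  have /addv_idPl sx : (<[x]> <= <<s>>)%VS by rewrite -memvE.
  by rewrite eB !span_cat span_cons addvA sx.
have fxs : free (x :: s) by rewrite free_cons xNs.
have [B [fB sB Bsr eB]] := IH _ fxs.
have perm_xs : (x :: s) ++ r =i s ++ x :: r.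
  by move=> y; rewrite /= !(inE, mem_cat) orbCA.
exists B; split=> //; first by move=> y ys; apply: sB; rewrite inE ys orbT.
  by move=> y /Bsr; rewrite perm_xs.
by rewrite eB; apply: eq_span.
Qed.

Lemma span_filterI B (p q : pred vT) : free B ->
  (<<filter p B>> :&: <<filter q B>> = <<filter (predI p q) B>>)%VS.
Proof.
move=> fB; apply/eqP; rewrite eq_sym eqEdim; apply/andP; split.
  rewrite subv_cap; apply/andP; split; apply: sub_span => x;
  by rewrite !mem_filter /= => /andP[/andP[px qx] xB]; rewrite ?px ?qx xB.
have := dimv_sum_cap <<filter p B>>%VS <<filter q B>>%VS.
rewrite -span_cat (@eq_span _ _ _ (filter (predU p q) B)); last first.
  by move=> x; rewrite mem_cat !mem_filter -andb_orl.
rewrite !(eqP (filter_free _ fB)) !size_filter -(count_predUI p q).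
by move/addnI ->.
Qed.

Lemma span_cap_filter_rem B (bs : seq vT) : free B ->
  (<<B>> :&: \bigcap_(b <- bs) <<filter (predC1 b) B>>)%VS =
    <<filter [pred x | x \notin bs] B>>%VS.
Proof.
move=> fB; elim: bs => [|b bs IH].
  by rewrite big_nil capvf; apply: eq_span => x; rewrite mem_filter.
rewrite big_cons capvA (capvC <<B>>%VS) -capvA IH span_filterI //.
by apply: eq_span => x; rewrite !mem_filter /= in_cons negb_or.
Qed.

Lemma memv_span_dim X w :
  (w \in <<X>>%VS) = (\dim <<w :: X>>%VS == \dim <<X>>%VS).
Proof.
rewrite span_cons eq_sym (dimv_leqif_sup (addvSr _ _)).2.
by rewrite subv_add subvv andbT -memvE.
Qed.

End SpanFacts.

Section Hyperplanes.
Variables (K : finFieldType) (N : nat).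
Local Notation V := 'rV[K]_N.
Implicit Types (F I J X : {set V}) (W H : {vspace V}).

Lemma dim_rV : \dim (fullv : {vspace V}) = N.
Proof. by rewrite dimvf /dim /= mul1n. Qed.

Lemma dim_indep J : indep J -> \dim <<enum J>>%VS = #|J|.
Proof. by move/eqP->; rewrite cardE. Qed.

Lemma indep_spanning_subset X :
  exists J, [/\ J \subset X, indep J & <<enum J>>%VS = <<enum X>>%VS].
Proof.
have [B [fB _ BX eB]] := free_extension (enum X) (nil_free _).
have enumB := perm_enum_set_uniq (free_uniq fB).
exists [set x in B]; split.
- by apply/subsetP => x; rewrite inE => /BX; rewrite mem_enum.
- by rewrite /indep (perm_free enumB).
- by rewrite (eq_span (perm_mem enumB)) eB.
Qed.

Lemma card_indep_le_dim J X : J \subset X -> indep J -> #|J| <= \dim <<enum X>>%VS.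
Proof.
move=> JX /dim_indep <-; apply/dimvS/sub_span => x.
by rewrite !mem_enum; apply: (subsetP JX).
Qed.

Lemma memv_span_set_dim X w :
  (w \in <<enum X>>%VS) = (\dim <<enum (w |: X)>>%VS == \dim <<enum X>>%VS).
Proof.
rewrite memv_span_dim; congr (\dim _ == _); apply: eq_span => x.
by rewrite mem_enum in_cons !inE mem_enum.
Qed.

Lemma dim_hyperplane F H : hyperplane_gen F H -> \dim H = N.-1.
Proof. by case=> I [_ cardI indepI ->]; rewrite dim_indep. Qed.

Lemma dim_capv_hyperplane F W H : hyperplane_gen F H -> ~~ (W <= H)%VS ->
  \dim (W :&: H)%VS = (\dim W).-1.
Proof.
move=> hypH nWH.
have leN : \dim (W + H)%VS <= N by have := dimvS (subvf (W + H)); rewrite dim_rV.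
have ltWH : \dim H < \dim (W + H)%VS.
  by rewrite (ltn_leqif (dimv_leqif_sup (addvSr _ _))) subv_add subvv andbT.
have := dimv_sum_cap W H; rewrite (dim_hyperplane hypH) in ltWH *; lia.
Qed.

Definition hyperplane_cap F W : Prop :=
  exists2 Hs : seq {vspace V},
    forall H, H \in Hs -> hyperplane_gen F H & W = (\bigcap_(H <- Hs) H)%VS.

Lemma hyperplane_capT F : hyperplane_cap F fullv.
Proof. by exists [::]; rewrite ?big_nil. Qed.

Lemma hyperplane_capI F W1 W2 :
  hyperplane_cap F W1 -> hyperplane_cap F W2 -> hyperplane_cap F (W1 :&: W2)%VS.
Proof.
move=> [Hs1 hyp1 ->] [Hs2 hyp2 ->]; exists (Hs1 ++ Hs2); last by rewrite big_cat.
by move=> H; rewrite mem_cat => /orP[/hyp1|/hyp2].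
Qed.

Lemma hyperplane_cap_gen F H : hyperplane_gen F H -> hyperplane_cap F H.
Proof.
by move=> hypH; exists [:: H]; rewrite ?big_seq1 // => H'; rewrite inE => /eqP->.
Qed.

Lemma hyperplane_gen_basis_rem F (B : seq V) b :
  free B -> {subset B <= F} -> <<B>>%VS = fullv -> b \in B ->
  hyperplane_gen F <<filter (predC1 b) B>>%VS.
Proof.
move=> fB BF eB bB; have uB := free_uniq fB.
have enumB := perm_enum_set_uniq (filter_uniq (predC1 b) uB).
exists [set x in filter (predC1 b) B]; split.
- by apply/subsetP => x; rewrite inE mem_filter => /andP[_ /BF].
- by rewrite cardE (perm_size enumB) -rem_filter // size_rem // -(eqP fB) eB dim_rV.
- by rewrite /indep (perm_free enumB) filter_free.
- by rewrite (eq_span (perm_mem enumB)).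
Qed.

Section SpanningFamily.
Variable F : {set V}.
Hypothesis spanF : <<enum F>>%VS = fullv.

Lemma free_extension_in (s : seq V) : free s -> {subset s <= F} ->
  exists B, [/\ free B, {subset s <= B}, {subset B <= F} & <<B>>%VS = fullv].
Proof.
move=> fs sF; have [B [fB sB BsF eB]] := free_extension (enum F) fs.
exists B; split=> //.
  by move=> x /BsF; rewrite mem_cat mem_enum => /orP[/sF|].
apply/eqP; rewrite eqEsubv subvf /= eB -spanF; apply: sub_span => x xF.
by rewrite mem_cat xF orbT.
Qed.

Lemma hyperplane_cap_span I : I \subset F -> hyperplane_cap F <<enum I>>%VS.
Proof.
move=> IF; have [BI [fBI _ BIsI /= eBI]] := free_extension (enum I) (nil_free _).
have BIF : {subset BI <= F} by move=> x /BIsI; rewrite mem_enum; apply: (subsetP IF).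
have [B [fB BIB BF eB]] := free_extension_in fBI BIF.
exists [seq <<filter (predC1 b) B>>%VS | b <- B & b \notin BI].
  move=> H /mapP[b]; rewrite mem_filter => /andP[_ bB] ->.
  exact: hyperplane_gen_basis_rem.
rewrite big_map -(capfv (\bigcap_(b <- _) _)%VS) -{1}eB span_cap_filter_rem // -eBI.
apply: eq_span => x; rewrite mem_filter /= mem_filter negb_and negbK.
by case: (boolP (x \in BI)) => [/BIB ->|_] //=; rewrite andNb.
Qed.

Lemma exists_hyperplane_nsub W : W != 0%VS ->
  exists2 H, hyperplane_gen F H & ~~ (W <= H)%VS.
Proof.
move=> W0; have [//|B [fB _ BF eB]] := @free_extension_in [::] (nil_free _).
have capB0 : (<<B>> :&: \bigcap_(b <- B) <<filter (predC1 b) B>>)%VS = 0%VS.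
  rewrite span_cap_filter_rem // -span_nil.
  by apply: eq_span => x; rewrite mem_filter andNb.
have [/allP Wall | /allPn[b bB WNb]] :=
  boolP (all (fun b => W <= <<filter (predC1 b) B>>)%VS B).
  suff : (W <= 0)%VS by rewrite subv0 (negbTE W0).
  rewrite -capB0 subv_cap eB subvf /= big_seq.
  by elim/big_rec: _ => [|b U bB WU]; rewrite ?subvf // subv_cap WU Wall.
by exists <<filter (predC1 b) B>>%VS => //; apply: hyperplane_gen_basis_rem.
Qed.

Lemma hyperplane_cap_split W : 1 < \dim W -> exists H1 H2,
  [/\ hyperplane_gen F H1, hyperplane_gen F H2,
      \dim (W :&: H1) < \dim W, \dim (W :&: H2) < \dim W
    & (W :&: H1 + W :&: H2)%VS = W].
Proof.
move=> dimW; have W0 : W != 0%VS by rewrite -dimv_eq0 -lt0n ltnW.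
have [H1 hypH1 nWH1] := exists_hyperplane_nsub W0.
have W10 : (W :&: H1)%VS != 0%VS.
  by rewrite -dimv_eq0 (dim_capv_hyperplane hypH1 nWH1) -lt0n -ltnS prednK // ltnW.
have [H2 hypH2 nW1H2] := exists_hyperplane_nsub W10.
have nWH2 : ~~ (W <= H2)%VS by apply: contra nW1H2; apply: subv_trans; apply: capvSl.
have ltW1 : (\dim W).-1 < \dim W by rewrite ltn_predL ltnW.
exists H1, H2; split;
  rewrite ?(dim_capv_hyperplane hypH1 nWH1) ?(dim_capv_hyperplane hypH2 nWH2) //.
apply/eqP; rewrite eqEdim subv_add !capvSl /=.
have : \dim (W :&: H2) < \dim (W :&: H1 + W :&: H2).
  rewrite (ltn_leqif (dimv_leqif_sup (addvSr _ _))) subv_add subvv andbT.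
  by apply: contra nW1H2 => /subv_trans-> //; apply: capvSr.
rewrite (dim_capv_hyperplane hypH2 nWH2); lia.
Qed.

End SpanningFamily.

End Hyperplanes.

Section ExtendedFamily.
Variables (K : finFieldType) (N : nat).
Local Notation V := 'rV[K]_N.
Implicit Types (A F : {set V}) (W : {vspace V}).

Definition span_in A W : {vspace V} := <<enum [set w in A | w \in W]>>%VS.

Lemma span_in_sub A W : (span_in A W <= W)%VS.
Proof. by apply/span_subvP => w; rewrite mem_enum inE => /andP[]. Qed.

Lemma span_inS A W1 W2 : (W1 <= W2)%VS -> (span_in A W1 <= span_in A W2)%VS.
Proof.
move=> sW12; apply: sub_span => w; rewrite !mem_enum !inE => /andP[-> /=].
exact: (subvP sW12).
Qed.

Variables F Fbar : {set V}.
Hypothesis spanF : <<enum F>>%VS = fullv.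
Hypothesis lineF : forall v, line_of_hyperplanes F v ->
  exists2 w, w \in Fbar & <[w]>%VS = <[v]>%VS.

Lemma hyperplane_cap_line_sub W : hyperplane_cap F W -> \dim W <= 1 ->
  (W <= span_in Fbar W)%VS.
Proof.
move=> [Hs hypHs eW] dimW; have [-> | W0] := eqVneq W 0%VS; first exact: sub0v.
have pick0 : vpick W != 0%R by rewrite vpick0.
have eWpick : W = <[vpick W]>%VS.
  by apply/eqP; rewrite eq_sym eqEdim -memvE memv_pick dim_vline pick0.
have [w wFbar ew] : exists2 w, w \in Fbar & <[w]>%VS = <[vpick W]>%VS.
  by apply: lineF; split=> //; exists Hs; rewrite -eWpick -eW.
rewrite {1}eWpick -ew -memvE memv_span // mem_enum inE wFbar /=.
by rewrite eWpick -ew memv_line.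
Qed.

Lemma hyperplane_cap_spanned W : hyperplane_cap F W -> span_in Fbar W = W.
Proof.
have [n] := ubnP (\dim W); elim: n W => // n IH W ltWn capW.
apply/eqP; rewrite eqEsubv span_in_sub /=.
have [dimW | dimW] := leqP (\dim W) 1; first exact: hyperplane_cap_line_sub.
have [H1 [H2 [hypH1 hypH2 ltW1 ltW2 <-]]] := hyperplane_cap_split spanF dimW.
have spanned H : hyperplane_gen F H -> \dim (W :&: H) < \dim W ->
    span_in Fbar (W :&: H) = (W :&: H)%VS.
  move=> hypH ltWH; apply: IH; first exact: leq_trans ltWH _.
  exact: hyperplane_capI capW (hyperplane_cap_gen hypH).
rewrite subv_add -{1}(spanned _ hypH1 ltW1) -{2}(spanned _ hypH2 ltW2).
by rewrite !span_inS ?addvSl ?addvSr.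
Qed.

End ExtendedFamily.

Section MatroidIsomorphism.
Variables (K : finFieldType) (N : nat).
Local Notation V := 'rV[K]_N.
Variables (Fbar Gbar : {set V}) (psi : V -> V).
Hypothesis iso : matroid_iso Fbar Gbar psi.

Lemma dim_span_imset (X : {set V}) : X \subset Fbar ->
  \dim <<enum X>>%VS = \dim <<enum (psi @: X)%SET>>%VS.
Proof.
have [injFbar _ indepE] := iso.
have inj_sub (Y : {set V}) : Y \subset Fbar -> {in Y &, injective psi}.
  by move/subsetP/sub_in2; apply.
move=> XFbar; apply/eqP; rewrite eqn_leq; apply/andP; split.
  have [J [JX indepJ <-]] := indep_spanning_subset X.
  have JFbar := subset_trans JX XFbar.
  rewrite dim_indep // -(card_in_imset (inj_sub _ JFbar)).
  by apply: card_indep_le_dim; [exact: imsetS | rewrite -indepE].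
have [J' [J'X indepJ' <-]] := indep_spanning_subset (psi @: X).
have JFbar : X :&: psi @^-1: J' \subset Fbar := subset_trans (subsetIl _ _) XFbar.
rewrite dim_indep // -(imset_preimset J'X) (card_in_imset (inj_sub _ JFbar)).
by apply: card_indep_le_dim (subsetIl _ _) _; rewrite indepE // imset_preimset.
Qed.

Lemma mem_span_imset (I : {set V}) w : I \subset Fbar -> w \in Fbar ->
  (w \in <<enum I>>%VS) = (psi w \in <<enum (psi @: I)%SET>>%VS).
Proof.
move=> IFbar wFbar; rewrite !memv_span_set_dim -imsetU1 -!dim_span_imset //.
by rewrite subUset sub1set wFbar.
Qed.

End MatroidIsomorphism.

Section SpanTypes.
Variables (K : finFieldType) (N : nat).
Local Notation V := 'rV[K]_N.
Implicit Types (F : {set V}) (Tt S : {set {set V}}) (phi : {set V} -> {set V}).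

(* Subsets not contained in [F] belong to every type, so they impose no constraint. *)
Definition span_type F phi (v : V) : {set {set V}} :=
  [set I : {set V} | (I \subset F) ==> (v \in <<enum (phi I)>>%VS)].

Definition min_card_in F Tt : nat :=
  \big[minn/N.+1]_(I : {set V} | (I \subset F) && (I \in Tt)) #|I|.

Lemma wt_span_type F v : wt F v = min_card_in F (span_type F id v).
Proof. by apply: eq_bigl => I; rewrite inE; case: (I \subset F). Qed.

Lemma wt_imset_span_type F (psi : V -> V) v : {in F &, injective psi} ->
  wt (psi @: F) v = min_card_in F (span_type F (fun I => psi @: I) v).
Proof.
move=> injF; apply: eq_bigmin_image => [J /andP[JF vJ] | I].
  have injJ : {in F :&: psi @^-1: J &, injective psi}.
    by apply: sub_in2 injF => x /setIP[].
  exists (F :&: psi @^-1: J); last by rewrite -{2}(imset_preimset JF) card_in_imset.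
  by rewrite subsetIl inE subsetIl /= imset_preimset.
rewrite inE => /andP[IF]; rewrite IF /= => vI; exists (psi @: I).
  by rewrite imsetS.
by rewrite card_in_imset //; apply: sub_in2 injF; apply/subsetP.
Qed.

Lemma memv_bigcap_span_type F phi S v :
  (v \in (\bigcap_(I in S | I \subset F) <<enum (phi I)>>)%VS) =
    (S \subset span_type F phi v).
Proof.
rewrite memvE; apply/subv_bigcapP/subsetP => [vS I IS | vS I /andP[IS IF]].
  by rewrite inE; apply/implyP => IF; rewrite memvE; apply: vS; rewrite IS.
by have := vS I IS; rewrite inE IF -memvE.
Qed.

Lemma card_upset_span_type F phi S :
  #|[set v | S \subset span_type F phi v]| =
    #|K| ^ \dim (\bigcap_(I in S | I \subset F) <<enum (phi I)>>)%VS.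
Proof.
by rewrite -card_vspace; apply: eq_card => v; rewrite inE memv_bigcap_span_type.
Qed.

End SpanTypes.

Section Transfer.
Variables (K : finFieldType) (N : nat).
Local Notation V := 'rV[K]_N.
Variables (F G Fbar Gbar : {set V}) (psi : V -> V).
Hypotheses (spanF : <<enum F>>%VS = fullv) (spanG : <<enum G>>%VS = fullv).
Hypothesis lineF : forall v, line_of_hyperplanes F v ->
  exists2 w, w \in Fbar & <[w]>%VS = <[v]>%VS.
Hypothesis lineG : forall v, line_of_hyperplanes G v ->
  exists2 w, w \in Gbar & <[w]>%VS = <[v]>%VS.
Hypotheses (FFbar : F \subset Fbar) (iso : matroid_iso Fbar Gbar psi).
Hypothesis imF : psi @: F = G.

Lemma span_type_imset w : w \in Fbar ->
  span_type F id w = span_type F (fun I => psi @: I) (psi w).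
Proof.
move=> wFbar; apply/setP => I; rewrite !inE; case IF: (I \subset F) => //=.
exact: (mem_span_imset iso (subset_trans IF FFbar) wFbar).
Qed.

Lemma dim_bigcap_span_imset (S : {set {set V}}) :
  \dim (\bigcap_(I in S | I \subset F) <<enum I>>)%VS =
  \dim (\bigcap_(I in S | I \subset F) <<enum (psi @: I)%SET>>)%VS.
Proof.
pose WF := (\bigcap_(I in S | I \subset F) <<enum I>>)%VS.
pose WG := (\bigcap_(I in S | I \subset F) <<enum (psi @: I)%SET>>)%VS.
have capF : hyperplane_cap F WF.
  apply: big_ind => [||I /andP[_ IF]];
    [exact: hyperplane_capT | exact: hyperplane_capI | exact: hyperplane_cap_span].
have capG : hyperplane_cap G WG.
  apply: big_ind => [||I /andP[_ IF]];
    [exact: hyperplane_capT | exact: hyperplane_capI |].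
  by apply: (hyperplane_cap_span spanG); rewrite -imF; apply: imsetS.
have memWFG w : w \in Fbar -> (w \in WF) = (psi w \in WG).
  by move=> wFbar; rewrite !memv_bigcap_span_type span_type_imset.
have [_ imFbar _] := iso.
have imFbarW : psi @: [set w in Fbar | w \in WF] = [set y in Gbar | y \in WG].
  apply/setP => y; apply/imsetP/idP => [[w] | ].
    by rewrite inE => /andP[wFbar wWF] ->; rewrite inE -imFbar imset_f //= -memWFG.
  rewrite inE -imFbar => /andP[/imsetP[w wFbar ->] yWG].
  by exists w; rewrite // inE wFbar memWFG.
rewrite -/WF -/WG -(hyperplane_cap_spanned spanF lineF capF).
rewrite -(hyperplane_cap_spanned spanG lineG capG) /span_in -imFbarW.
by apply: (@dim_span_imset _ _ _ _ _ iso); apply/subsetP => w; rewrite inE => /andP[].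
Qed.

End Transfer.

Theorem proposition6p7 (K : finFieldType) (N : nat)
    (F G Fbar Gbar : {set 'rV[K]_N}) (psi : 'rV[K]_N -> 'rV[K]_N) :
  spanning_family F -> spanning_family G ->
  extended_family F Fbar -> extended_family G Gbar ->
  matroid_iso Fbar Gbar psi -> psi @: F = G ->
  forall t : nat, #|sphere F t| = #|sphere G t|.
Proof.
move=> [_ _ spanF] [_ _ spanG] [FFbar _ _ lineF] [_ _ _ lineG] iso imF t.
have [injFbar _ _] := iso.
have injF : {in F &, injective psi} by apply: sub_in2 injFbar; apply/subsetP.
have -> : sphere F t = [set v | min_card_in F (span_type F id v) == t].
  by apply/setP => v; rewrite !inE wt_span_type.
have -> : sphere G t =
    [set v | min_card_in F (span_type F (fun I => psi @: I) v) == t].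
  by apply/setP => v; rewrite !inE -imF wt_imset_span_type.
apply: (eq_card_preim_of_upsets _ (fun Tt => min_card_in F Tt == t)) => S.
rewrite !card_upset_span_type.
by rewrite (dim_bigcap_span_imset spanF spanG lineF lineG FFbar iso imF).
Qed.
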